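(* Let $R\subset S$ be an FCP ring extension. Then $\pounds[R,S]\leq \ell[R,S]\leq \mathrm{L}_R(S/R)$.
   Context: All rings are commutative with identity. $[R,S]$ is the lattice of $R$-subalgebras of $S$ (meet = intersection, join = product). FCP: every chain in $[R,S]$ is finite. $T\subset U$ minimal means $[T,U]=\{T,U\}$; atoms of $[R,S]$ are the $T$ with $R\subset T$ minimal; the socle $\mathcal S[R,S]$ is the product of all atoms. The Loewy series: $S_0=R$, $S_{i+1}=\mathcal S[S_i,S]$ while $S_i\neq S$; $\pounds[R,S]$ is the least $n$ with $S_n=S$. $\ell[R,S]$ is the supremum of lengths of chains in $[R,S]$, and $\mathrm{L}_R(S/R)$ is the length of the $R$-module $S/R$. *)

From HB Require Import structures.
From mathcomp Require Import all_boot all_algebra.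
From Stdlib Require Import List.
Set Implicit Arguments. Unset Strict Implicit. Unset Printing Implicit Defensive.
Import GRing.Theory.
Local Open Scope ring_scope.

Section RingExt.
Variable S : comPzRingType.

Definition subset_of (A B : S -> Prop) := forall x, A x -> B x.
Definition psubset_of (A B : S -> Prop) := subset_of A B /\ ~ subset_of B A.

Definition is_subring (T : S -> Prop) :=
  T 1 /\ (forall x y, T x -> T y -> T (x - y)) /\ (forall x y, T x -> T y -> T (x * y)).

Definition interm (R T : S -> Prop) := is_subring T /\ subset_of R T.

Definition minimal_ext (T U : S -> Prop) :=
  psubset_of T U /\
  forall V, interm T V -> subset_of V U -> V = T \/ V = U.

Definition atom (T U : S -> Prop) := is_subring U /\ minimal_ext T U.

Definition gen_subring (A : S -> Prop) : S -> Prop :=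
  fun x => forall U, is_subring U -> subset_of A U -> U x.

(* socle of [T,S]: product (join = generated subring) of all atoms of [T,S]
   (T is included as well, which changes nothing when atoms exist, and makes
    the socle of [S,S] equal to S) *)
Definition socle (T : S -> Prop) : S -> Prop :=
  gen_subring (fun x => T x \/ exists U, atom T U /\ U x).

Fixpoint loewy (R : S -> Prop) (n : nat) : S -> Prop :=
  match n with
  | O => R
  | n.+1 => socle (loewy R n)
  end.

Definition whole : S -> Prop := fun _ => True.

(* n <= £[R,S]   (£[R,S] = least n with S_n = S, or +oo) *)
Definition loewy_ge (R : S -> Prop) (n : nat) :=
  forall m, (m < n)%N -> loewy R m <> whole.

Definition ring_chain_len (R : S -> Prop) (n : nat) :=
  exists T : nat -> S -> Prop,
    (forall i, (i <= n)%N -> interm R (T i)) /\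
    (forall i, (i < n)%N -> psubset_of (T i) (T i.+1)).

Definition is_chain (R : S -> Prop) (C : (S -> Prop) -> Prop) :=
  (forall T, C T -> interm R T) /\
  (forall T U, C T -> C U -> subset_of T U \/ subset_of U T).
Definition FCP (R : S -> Prop) :=
  forall C, is_chain R C -> exists s : list (S -> Prop), forall T, C T -> In T s.

(* R-submodules of S containing R, i.e. R-submodules of S/R *)
Definition Rsubmod (R M : S -> Prop) :=
  M 0 /\ (forall x y, M x -> M y -> M (x - y)) /\ (forall r x, R r -> M x -> M (r * x)).

Definition mod_chain_len (R : S -> Prop) (n : nat) :=
  exists M : nat -> S -> Prop,
    (forall i, (i <= n)%N -> Rsubmod R (M i) /\ subset_of R (M i)) /\
    (forall i, (i < n)%N -> psubset_of (M i) (M i.+1)).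

(* sup {n | P n} <= sup {n | Q n} in nat \cup {+oo} *)
Definition sup_le (P Q : nat -> Prop) := forall n, P n -> exists2 m, Q m & (n <= m)%N.

End RingExt.

(* Under FCP, [R,S] has no infinite strictly descending chain, so every T <> S
   in [R,S] has an atom, which lies in the socle of [T,S] but not in T.  Hence
   the Loewy series increases strictly until it reaches S, and its first n
   terms form a chain of length n in [R,S].  Every ring of [R,S] is an
   R-submodule of S containing R, so a chain of rings is a chain of submodules
   of S/R. *)
From mathcomp Require Import all_boot all_algebra.
From Stdlib Require FinFun.
From Stdlib Require Import List FunctionalExtensionality PropExtensionality.
From Stdlib Require Import ClassicalEpsilon Classical.
Set Implicit Arguments. Unset Strict Implicit. Unset Printing Implicit Defensive.
Import GRing.Theory.
Local Open Scope ring_scope.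

Lemma not_injective_finite_range (X : Type) (f : nat -> X) (s : list X) :
  (forall k, In (f k) s) -> ~ FinFun.Injective f.
Proof.
move=> f_in_s f_inj.
have nodup : NoDup (map f (List.seq 0 (length s).+1)).
  exact: FinFun.Injective_map_NoDup (seq_NoDup _ _).
have incl_s : incl (map f (List.seq 0 (length s).+1)) s.
  by move=> x /in_map_iff [k [<- _]].
have := NoDup_incl_length nodup incl_s.
by rewrite length_map length_seq => /PeanoNat.Nat.nle_succ_diag_l.
Qed.

Lemma dependent_choice_seq (X : Type) (P : X -> Prop) (r : X -> X -> Prop) (x0 : X) :
  P x0 -> (forall x, P x -> exists y, P y /\ r y x) ->
  exists W : nat -> X, forall k, P (W k) /\ r (W k.+1) (W k).
Proof.
move=> Px0 step.
pose next (u : {x | P x}) : {x | P x} :=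
  let e := constructive_indefinite_description _ (step _ (proj2_sig u)) in
  exist _ (proj1_sig e) (proj1 (proj2_sig e)).
have r_next u : r (proj1_sig (next u)) (proj1_sig u).
  by rewrite /next /=; case: constructive_indefinite_description => y [].
exists (fun k => proj1_sig (iter k next (exist _ _ Px0))) => k.
by split; [exact: proj2_sig | exact: r_next].
Qed.

Section RingExtension.
Variable S : comPzRingType.
Implicit Types R T U V : S -> Prop.

Lemma subset_of_antisym (A B : S -> Prop) : subset_of A B -> subset_of B A -> A = B.
Proof.
move=> AB BA; apply: functional_extensionality => x.
by apply: propositional_extensionality; split; [exact: AB | exact: BA].
Qed.

Lemma subset_of_decr (W : nat -> S -> Prop) :
  (forall k, subset_of (W k.+1) (W k)) ->
  forall i j, (i <= j)%N -> subset_of (W j) (W i).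
Proof.
move=> Wdecr i j /subnKC <-; elim: (j - i)%N => [|d IH]; first by rewrite addn0.
by rewrite addnS => x /Wdecr; apply: IH.
Qed.

Lemma FCP_no_strict_decr_seq R (W : nat -> S -> Prop) : FCP R ->
  (forall k, interm R (W k)) -> ~ (forall k, psubset_of (W k.+1) (W k)).
Proof.
move=> fcpR W_interm Wsdecr.
have Wdecr := subset_of_decr (fun k => proj1 (Wsdecr k)).
have chainW : is_chain R (fun X => exists k, X = W k).
  split=> [X [k ->] // | X Y [i ->] [j ->]].
  by case: (leqP i j) => [/Wdecr|/ltnW/Wdecr]; [right | left].
have [s Ws] := fcpR _ chainW.
have not_sub i j : (i < j)%N -> ~ subset_of (W i) (W j).
  by move=> lt_ij WiWj; apply: (proj2 (Wsdecr i)) => x /WiWj; apply: Wdecr.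
apply: (not_injective_finite_range (f := W) (s := s)) => [k | i j eqW].
  by apply: Ws; exists k.
by case: (ltngtP i j) => // [/not_sub[] | /not_sub[]]; rewrite eqW.
Qed.

Lemma gen_subring_is_subring (A : S -> Prop) : is_subring (gen_subring A).
Proof.
split; first by move=> U [].
split=> x y Ax Ay U subU AU; have [_ [Usub Umul]] := subU.
- by apply: Usub; [exact: Ax | exact: Ay].
- by apply: Umul; [exact: Ax | exact: Ay].
Qed.

Lemma subset_gen_subring (A : S -> Prop) : subset_of A (gen_subring A).
Proof. by move=> x Ax U _; apply. Qed.

Lemma subset_socle T : subset_of T (socle T).
Proof. by move=> x Tx; apply: subset_gen_subring; left. Qed.

Lemma atom_subset_socle T U : atom T U -> subset_of U (socle T).
Proof. by move=> TU x Ux; apply: subset_gen_subring; right; exists U. Qed.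

Lemma atom_psubset_socle T U : atom T U -> psubset_of T (socle T).
Proof.
move=> /[dup] /atom_subset_socle Usoc [_ [[_ not_UT] _]].
by split=> [|socT]; [exact: subset_socle | apply: not_UT => x /Usoc /socT].
Qed.

Lemma interm_loewy R n : is_subring R -> interm R (loewy R n).
Proof.
move=> subR; elim: n => [|n [_ R_loewy]] /=; first by split.
by split=> [|x /R_loewy]; [exact: gen_subring_is_subring | exact: subset_socle].
Qed.

Definition proper_overring T U := is_subring U /\ psubset_of T U.

Lemma no_atom_proper_overring_descend T U : ~ (exists V, atom T V) ->
  proper_overring T U -> exists V, proper_overring T V /\ psubset_of V U.
Proof.
move=> no_atom [subU [TU not_UT]]; apply: NNPP => no_between.
apply: no_atom; exists U; do 2!split => //.
move=> V [subV TV] VU; apply: NNPP => /not_or_and [neq_VT neq_VU].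
apply: no_between; exists V.
split; [split=> //; split=> // VT | split=> // UV].
- by apply: neq_VT; apply: subset_of_antisym.
- by apply: neq_VU; apply: subset_of_antisym.
Qed.

Lemma FCP_atom_exists R T : FCP R -> interm R T -> T <> @whole S ->
  exists U, atom T U.
Proof.
move=> fcpR [subT RT] neq_TS; apply: NNPP => no_atom.
have S_over_T : proper_overring T (@whole S).
  by do 2!split=> //; move=> ST; apply: neq_TS; apply: subset_of_antisym.
have [W W_desc] := dependent_choice_seq S_over_T
  (@no_atom_proper_overring_descend T ^~ no_atom).
apply: (FCP_no_strict_decr_seq fcpR) (fun k => proj2 (W_desc k)) => k.
by have [[subW [TW _]] _] := W_desc k; split=> // x /RT /TW.
Qed.

Lemma loewy_psubset_succ R n : is_subring R -> FCP R ->
  loewy R n <> @whole S -> psubset_of (loewy R n) (loewy R n.+1).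
Proof.
move=> subR fcpR neq_S.
have [U] := FCP_atom_exists fcpR (interm_loewy n subR) neq_S.
exact: atom_psubset_socle.
Qed.

Lemma loewy_ring_chain R n : is_subring R -> FCP R ->
  loewy_ge R n -> ring_chain_len R n.
Proof.
move=> subR fcpR ge_n; exists (loewy R); split=> i lt_in.
  exact: interm_loewy.
exact: loewy_psubset_succ (ge_n i lt_in).
Qed.

Lemma interm_Rsubmod R T : interm R T -> Rsubmod R T.
Proof.
move=> [[T1 [Tsub Tmul]] RT]; split; first by rewrite -(subrr 1); apply: Tsub.
by split=> // r x /RT; apply: Tmul.
Qed.

Lemma ring_chain_mod_chain R n : ring_chain_len R n -> mod_chain_len R n.
Proof.
move=> [T [T_interm Tchain]]; exists T; split=> // i le_in.
have T_i := T_interm i le_in.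
by split; [exact: interm_Rsubmod | exact: proj2 T_i].
Qed.

End RingExtension.

Lemma sup_le_of_imp (P Q : nat -> Prop) : (forall n, P n -> Q n) -> sup_le P Q.
Proof. by move=> PQ n /PQ Qn; exists n. Qed.

Theorem proposition8p22 (S : comPzRingType) (R : S -> Prop) :
  is_subring R -> FCP R ->
  sup_le (loewy_ge R) (ring_chain_len R) /\
  sup_le (ring_chain_len R) (mod_chain_len R).
Proof.
move=> subR fcpR; split; apply: sup_le_of_imp => n.
- exact: loewy_ring_chain.
- exact: ring_chain_mod_chain.
Qed.
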